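(* In $\mathcal{V}$, for all $p,q\in P$: if $p\preccurlyeq q$ then $|S_p|\leqslant|S_q|$, and if $p\preccurlyeq^\ast q$ then $|S_p|\leqslant^\ast|S_q|$.
   Context: Work in $\mathsf{ZFA}$ (set theory with atoms) over a ground model of $\mathsf{ZFC}$ containing a doubly ordered set $\langle P,\preccurlyeq,\preccurlyeq^\ast\rangle$ (i.e. $\preccurlyeq$ a partial order on $P$, $\preccurlyeq^\ast$ a preorder on $P$, and $p\preccurlyeq q\Rightarrow p\preccurlyeq^\ast q$). Write $p\prec q$ for ($p\preccurlyeq q$ and $p\neq q$). For a quadruple $\langle x_0,x_1,x_2,x_3\rangle$ and $i<4$, $\mathrm{pr}_i(\langle x_0,x_1,x_2,x_3\rangle)=x_i$. For a set $S$, $\mathscr{S}(S)$ is the set of permutations of $S$. Define recursively $A_0=\{\langle0,p,\varnothing,k\rangle\mid p\in P,k\in\omega\}$ and $A_{n+1}=A_n\cup\{\langle n+1,q,a,0\rangle\mid q\in P,a\in A_n,\mathrm{pr}_1(a)\prec q\}\cup\{\langle n+1,q,a,k\rangle\mid q\in P,a\in A_n,\mathrm{pr}_1(a)\not\preccurlyeq q,\mathrm{pr}_1(a)\preccurlyeq^\ast q,k\in\omega\}$; let $A=\bigcup_{n}A_n$, whose elements serve as the atoms. Define groups $\mathcal{G}_n\subseteq\mathscr{S}(A_n)$: $\mathcal{G}_0=\{f\in\mathscr{S}(A_0)\mid \mathrm{pr}_1(f(a))=\mathrm{pr}_1(a)\text{ for all }a\in A_0\}$; for $f\in\mathscr{S}(A_{n+1})$,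 $f\in\mathcal{G}_{n+1}$ iff $f{\upharpoonright}A_n\in\mathcal{G}_n$ and for all $b\in A_{n+1}\setminus A_n$, $\mathrm{pr}_1(f(b))=\mathrm{pr}_1(b)$ and $\mathrm{pr}_2(f(b))=f(\mathrm{pr}_2(b))$. Let $\mathcal{G}=\{\pi\in\mathscr{S}(A)\mid \pi{\upharpoonright}A_n\in\mathcal{G}_n\text{ for all }n\}$. $\mathcal{V}$ is the permutation model determined by $\mathcal{G}$ and finite supports: $x\in\mathcal{V}$ iff $x\subseteq\mathcal{V}$ and there is a finite $B\subseteq A$ (a support of $x$) such that every $\pi\in\mathcal{G}$ fixing $B$ pointwise fixes $x$. For $p\in P$, $S_p=\{a\in A\mid \mathrm{pr}_1(a)=p\}$. For cardinals, $|X|\leqslant|Y|$ means there is an injection $X\to Y$, and $|X|\leqslant^\ast|Y|$ means there is a surjection from a subset of $Y$ onto $X$ (both computed in $\mathcal{V}$). *)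

(* Permutation model V of ZFA built from a doubly ordered set
   <P, le, les>.  Atoms are represented by an inductive type of quadruples. *)
From Stdlib Require Import List.
Import ListNotations.

(* A quadruple <0,p,emptyset,k>  is  Base p k ;
   a quadruple <n+1,q,a,k>       is  Ext n q a k  (first component n+1). *)
Inductive atom (P : Type) : Type :=
| Base (p : P) (k : nat)
| Ext (n : nat) (q : P) (a : atom P) (k : nat).
Arguments Base {P} p k.
Arguments Ext {P} n q a k.

Definition pr0 {P} (x : atom P) : nat :=
  match x with Base _ _ => 0 | Ext n _ _ _ => S n end.
Definition pr1 {P} (x : atom P) : P :=
  match x with Base p _ => p | Ext _ q _ _ => q end.
(* pr2 : None stands for the empty set (third component of level-0 atoms). *)
Definition pr2 {P} (x : atom P) : option (atom P) :=
  match x with Base _ _ => None | Ext _ _ a _ => Some a end.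
Definition pr3 {P} (x : atom P) : nat :=
  match x with Base _ k => k | Ext _ _ _ k => k end.

Section Model.
Variable P : Type.
Variable le : P -> P -> Prop.
Variable les : P -> P -> Prop.

Definition lt_strict (p q : P) : Prop := le p q /\ p <> q.

Fixpoint inA (n : nat) (x : atom P) : Prop :=
  match n with
  | 0 => exists p k, x = Base p k
  | S m =>
      inA m x
      \/ (exists q a, inA m a /\ lt_strict (pr1 a) q /\ x = Ext m q a 0)
      \/ (exists q a k, inA m a /\ ~ le (pr1 a) q /\ les (pr1 a) q
                        /\ x = Ext m q a k)
  end.

Definition inAll (x : atom P) : Prop := exists n, inA n x.

Definition perm_on (D : atom P -> Prop) (f : atom P -> atom P) : Prop :=
  (forall x, D x -> D (f x)) /\
  (forall x y, D x -> D y -> f x = f y -> x = y) /\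
  (forall y, D y -> exists x, D x /\ f x = y).

Fixpoint Gn (n : nat) (f : atom P -> atom P) : Prop :=
  match n with
  | 0 => perm_on (inA 0) f /\ (forall a, inA 0 a -> pr1 (f a) = pr1 a)
  | S m => perm_on (inA (S m)) f /\ Gn m f /\
      (forall b, inA (S m) b -> ~ inA m b ->
         pr1 (f b) = pr1 b /\ pr2 (f b) = option_map f (pr2 b))
  end.

Definition inG (f : atom P -> atom P) : Prop :=
  perm_on inAll f /\ forall n, Gn n f.

Definition Sp (p : P) (x : atom P) : Prop := inAll x /\ pr1 x = p.

Definition rel_in_V (R : atom P -> atom P -> Prop) : Prop :=
  (forall x y, R x y -> inAll x /\ inAll y) /\
  exists B : list (atom P), (forall b, In b B -> inAll b) /\
    forall f, inG f -> (forall b, In b B -> f b = b) ->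
      forall x y, inAll x -> inAll y -> (R x y <-> R (f x) (f y)).

Definition is_function (X Y : atom P -> Prop) (R : atom P -> atom P -> Prop)
  : Prop :=
  (forall x y, R x y -> X x /\ Y y) /\
  (forall x, X x -> exists y, R x y) /\
  (forall x y y', R x y -> R x y' -> y = y').

Definition card_le_V (X Y : atom P -> Prop) : Prop :=
  exists R, rel_in_V R /\ is_function X Y R /\
    (forall x x' y, R x y -> R x' y -> x = x').

Definition card_le_star_V (X Y : atom P -> Prop) : Prop :=
  exists R, rel_in_V R /\
    (exists D : atom P -> Prop, (forall y, D y -> Y y) /\ is_function D X R) /\
    (forall x, X x -> exists y, R y x).

End Model.

Definition partial_order {P} (r : P -> P -> Prop) : Prop :=
  (forall p, r p p) /\ (forall p q, r p q -> r q p -> p = q) /\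
  (forall p q s, r p q -> r q s -> r p s).
Definition preorder {P} (r : P -> P -> Prop) : Prop :=
  (forall p, r p p) /\ (forall p q s, r p q -> r q s -> r p s).

Arguments inA {P} le les n x.
Arguments inAll {P} le les x.
Arguments Gn {P} le les n f.
Arguments inG {P} le les f.
Arguments Sp {P} le les p x.
Arguments rel_in_V {P} le les R.
Arguments card_le_V {P} le les X Y.
Arguments card_le_star_V {P} le les X Y.

From Stdlib Require Import Lia Classical.

(* Every element of G preserves the level [pr0] and the label [pr1] of an atom
   and commutes with the parent projection [pr2].  Hence the relation "y is a
   child of x labelled q one level up" is fixed by all of G: it lies in V with
   empty support.  For p = q the identity works; for p <> q with p ≼* q every
   x in S_p, of level n, has the child <n+1, q, x, 0>;
   when p ≼ q this is its only child labelled q (the fourth coordinate is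
   forced to be 0), which gives an injection S_p -> S_q, and in
   general the children still cover S_p, so the inverse relation is a
   surjection from a subset of S_q onto S_p. *)

Section PermutationModel.
Variable P : Type.
Variables le les : P -> P -> Prop.

Lemma inA_S n x : inA le les n x -> inA le les (S n) x.
Proof. now left. Qed.

Lemma inA_mono n m x : n <= m -> inA le les n x -> inA le les m x.
Proof. induction 1; auto using inA_S. Qed.

Lemma inA_level n x : inA le les n x -> inA le les (pr0 x) x /\ pr0 x <= n.
Proof.
  revert x; induction n as [|n IHn]; intros x Hx.
  - destruct Hx as [p [k ->]]; split; [exists p, k|]; simpl; auto.
  - destruct Hx as [Hx|[Hx|Hx]].
    + destruct (IHn x Hx); split; [assumption|lia].
    + destruct Hx as [q [a [Ha [Hlt ->]]]].
      split; [simpl; right; left; exists q, a; auto|simpl; lia].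
    + destruct Hx as [q [a [k [Ha [Hnle [Hles ->]]]]]].
      split; [simpl; right; right; exists q, a, k; auto|simpl; lia].
Qed.

Lemma inA_iff_level x m : inAll le les x -> (inA le les m x <-> pr0 x <= m).
Proof.
  intros [n Hn]; split; intro Hm.
  - exact (proj2 (inA_level m x Hm)).
  - exact (inA_mono (pr0 x) m x Hm (proj1 (inA_level n x Hn))).
Qed.

Lemma inA_Ext_inv n m q a k : inA le les n (Ext m q a k) ->
  inA le les m a /\ ((lt_strict P le (pr1 a) q /\ k = 0) \/
                     (~ le (pr1 a) q /\ les (pr1 a) q)).
Proof.
  induction n as [|n IHn]; intro H.
  - destruct H as [? [? H]]; discriminate.
  - destruct H as [H|[[q' [a' [H1 [H2 E]]]]|[q' [a' [k' [H1 [H2 [H3 E]]]]]]]].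
    + auto.
    + injection E; intros; subst; auto.
    + injection E; intros; subst; auto.
Qed.

Lemma inAll_Ext_parent m q a k : inAll le les (Ext m q a k) -> inAll le les a.
Proof. intros [n Hn]; exists m; exact (proj1 (inA_Ext_inv n m q a k Hn)). Qed.

Lemma Gn_perm_on n f : Gn le les n f -> perm_on P (inA le les n) f.
Proof. destruct n; simpl; tauto. Qed.

(* The level of x is the least m with x in A_m.  Since f maps A_m into
   itself it cannot raise the level, and since it is injective on A and onto
   A_(m-1) it cannot lower it either. *)
Lemma inG_pr0 f x : inG le les f -> inAll le les x -> pr0 (f x) = pr0 x.
Proof.
  intros [[HA [Hinj _]] HG] Hx.
  assert (Hfx : inAll le les (f x)) by auto.
  assert (Hup : pr0 (f x) <= pr0 x).
  { apply (inA_iff_level (f x) _ Hfx), (Gn_perm_on _ _ (HG (pr0 x))).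
    apply (inA_iff_level x _ Hx); lia. }
  destruct (pr0 x) as [|m] eqn:E; [lia|].
  destruct (Compare_dec.le_lt_dec (pr0 (f x)) m) as [Hlow|]; [|lia].
  apply (inA_iff_level (f x) m Hfx) in Hlow.
  destruct (Gn_perm_on _ _ (HG m)) as [_ [_ Hsur]].
  destruct (Hsur _ Hlow) as [z [Hz Hfz]].
  assert (Hzx : z = x) by (apply Hinj; [exists m|..]; auto).
  subst z; apply (inA_iff_level x m Hx) in Hz; lia.
Qed.

Lemma inG_pr1_pr2 f x : inG le les f -> inAll le les x ->
  pr1 (f x) = pr1 x /\ pr2 (f x) = option_map f (pr2 x).
Proof.
  intros HG Hx; pose proof (inG_pr0 f x HG Hx) as E0.
  destruct HG as [_ HGn], x as [p k | m q a k].
  - split.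
    + apply (proj2 (HGn 0)); exists p, k; reflexivity.
    + destruct (f (Base p k)); [reflexivity|discriminate].
  - apply (proj2 (proj2 (HGn (S m)))).
    + apply (inA_iff_level _ _ Hx); simpl; lia.
    + intro H; apply (inA_iff_level _ _ Hx) in H; simpl in H; lia.
Qed.

Lemma Sp_inG_iff f p x : inG le les f -> inAll le les x ->
  (Sp le les p x <-> Sp le les p (f x)).
Proof.
  intros HG Hx; unfold Sp.
  rewrite (proj1 (inG_pr1_pr2 f x HG Hx)).
  destruct HG as [[HA _] _]; intuition.
Qed.

Lemma rel_in_V_of_inG_invariant (R : atom P -> atom P -> Prop) :
  (forall x y, R x y -> inAll le les x /\ inAll le les y) ->
  (forall f, inG le les f -> forall x y, inAll le les x -> inAll le les y ->
     (R x y <-> R (f x) (f y))) ->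
  rel_in_V le les R.
Proof.
  intros HRA Hinv; split; [exact HRA|].
  exists nil; split; [intros b []|]; auto.
Qed.

Lemma rel_in_V_flip (R : atom P -> atom P -> Prop) :
  rel_in_V le les R -> rel_in_V le les (fun x y => R y x).
Proof.
  intros [HRA [B [HB Hinv]]]; split.
  - intros x y H; apply and_comm, HRA, H.
  - exists B; split; [exact HB|]; intros f HG HfB x y Hx Hy.
    exact (Hinv f HG HfB y x Hy Hx).
Qed.

Lemma card_le_star_V_of_cover (X Y : atom P -> Prop)
  (R : atom P -> atom P -> Prop) :
  rel_in_V le les R ->
  (forall x y, R x y -> X x /\ Y y) ->
  (forall x, X x -> exists y, R x y) ->
  (forall x x' y, R x y -> R x' y -> x = x') ->
  card_le_star_V le les X Y.
Proof.
  intros HR HXY Htot Hinj.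
  exists (fun y x => R x y); split; [exact (rel_in_V_flip R HR)|split].
  - exists (fun y => exists x, R x y); split.
    + intros y [x H]; apply (HXY x y H).
    + split; [|split].
      * intros y x H; split; [eauto|apply (HXY x y H)].
      * intros y [x H]; eauto.
      * intros y x x' H H'; exact (Hinj x x' y H H').
  - exact Htot.
Qed.

Lemma card_le_V_star (X Y : atom P -> Prop) :
  card_le_V le les X Y -> card_le_star_V le les X Y.
Proof.
  intros [R [HR [[HXY [Htot _]] Hinj]]].
  exact (card_le_star_V_of_cover X Y R HR HXY Htot Hinj).
Qed.

Lemma card_le_V_Sp_refl p : card_le_V le les (Sp le les p) (Sp le les p).
Proof.
  exists (fun x y => Sp le les p x /\ y = x); split; [|split; [split; [|split]|]].
  - apply rel_in_V_of_inG_invariant.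
    + intros x y [[Hx _] ->]; auto.
    + intros f HG x y Hx Hy; rewrite (Sp_inG_iff f p x HG Hx).
      destruct HG as [[_ [Hinj _]] _].
      split; intros [Hp E]; split; auto; try congruence; apply Hinj; auto.
  - intros x y [H ->]; auto.
  - intros x H; eauto.
  - intros x y y' [_ ->] [_ ->]; reflexivity.
  - intros x x' y [_ ->] [_ ->]; reflexivity.
Qed.

(* The level condition matters: [Ext m q x k] is an atom for every m >= pr0 x. *)
Definition child (q : P) (x y : atom P) : Prop :=
  inAll le les y /\ pr1 y = q /\ pr2 y = Some x /\ pr0 y = S (pr0 x).

Lemma child_inG_iff f q x y : inG le les f -> inAll le les x -> inAll le les y ->
  (child q x y <-> child q (f x) (f y)).
Proof.
  intros HG Hx Hy; unfold child.
  destruct (inG_pr1_pr2 f y HG Hy) as [-> ->].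
  rewrite (inG_pr0 f x HG Hx), (inG_pr0 f y HG Hy).
  destruct HG as [[HA [Hinj _]] _]; split.
  - intros [_ [Hq [-> E0]]]; auto.
  - intros [_ [Hq [Hpar E0]]]; repeat split; auto.
    destruct y as [|m q' a k]; [discriminate|]; simpl in Hpar |- *.
    injection Hpar; intro Hfa; f_equal; apply Hinj; auto.
    exact (inAll_Ext_parent m q' a k Hy).
Qed.

Lemma rel_in_V_child p q :
  rel_in_V le les (fun x y => Sp le les p x /\ child q x y).
Proof.
  apply rel_in_V_of_inG_invariant.
  - intros x y [[Hx _] [Hy _]]; auto.
  - intros f HG x y Hx Hy.
    rewrite (Sp_inG_iff f p x HG Hx), (child_inG_iff f q x y HG Hx Hy).
    reflexivity.
Qed.

Lemma child_Ext p q x : p <> q -> les p q -> Sp le les p x ->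
  child q x (Ext (pr0 x) q x 0).
Proof.
  intros Hne Hles [Hx Hp]; repeat split; auto.
  exists (S (pr0 x)); right.
  assert (Hlev : inA le les (pr0 x) x) by (apply (inA_iff_level x _ Hx); lia).
  destruct (classic (le p q)) as [Hle|Hnle].
  - left; exists q, x; repeat split; subst; auto.
  - right; exists q, x, 0; repeat split; subst; auto.
Qed.

Lemma child_unique p q x y : le p q -> Sp le les p x -> child q x y ->
  y = Ext (pr0 x) q x 0.
Proof.
  intros Hpq [_ Hp] [[n Hy] [Hq [Hpar E0]]].
  destruct y as [|m q' a k]; [discriminate|]; simpl in *.
  injection Hpar; injection E0; intros; subst.
  destruct (inA_Ext_inv _ _ _ _ _ Hy) as [_ [[_ ->]|[Hnle _]]];
    [reflexivity|contradiction].
Qed.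

Lemma child_parent_unique q x x' y : child q x y -> child q x' y -> x = x'.
Proof. intros (_ & _ & H & _) (_ & _ & H' & _); congruence. Qed.

End PermutationModel.

Theorem lemma2p1 (P : Type) (le les : P -> P -> Prop)
  (Hle : partial_order le) (Hles : preorder les)
  (Hsub : forall p q, le p q -> les p q) :
  forall p q : P,
    (le p q -> card_le_V le les (Sp le les p) (Sp le les q)) /\
    (les p q -> card_le_star_V le les (Sp le les p) (Sp le les q)).
Proof.
  intros p q; destruct (classic (p = q)) as [<-|Hne].
  { split; intros _; [|apply card_le_V_star]; apply card_le_V_Sp_refl. }
  set (R := fun x y => Sp le les p x /\ child P le les q x y).
  assert (HRSp : forall x y, R x y -> Sp le les p x /\ Sp le les q y)
    by (intros x y [Hx (Hy & Hq & _)]; split; [|split]; auto).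
  assert (HRinj : forall x x' y, R x y -> R x' y -> x = x')
    by (intros x x' y [_ H] [_ H']; exact (child_parent_unique _ _ _ _ _ _ _ H H')).
  split; intro Hpq.
  - exists R; split; [apply rel_in_V_child|split; [split; [|split]|]]; auto.
    + intros x Hx; eexists; split; [exact Hx|apply (child_Ext _ _ _ p); auto].
    + intros x y y' [Hx H] [_ H'].
      now rewrite (child_unique _ _ _ _ _ _ _ Hpq Hx H), (child_unique _ _ _ _ _ _ _ Hpq Hx H').
  - apply (card_le_star_V_of_cover _ _ _ _ _ R (rel_in_V_child _ _ _ p q) HRSp); auto.
    intros x Hx; eexists; split; [exact Hx|apply (child_Ext _ _ _ p); auto].
Qed.
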